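(* If $G$ is a pseudo-cograph, then every connected induced subgraph $H$ of $G$ has diameter at most $4$. Consequently, a pseudo-cograph contains no induced path $P_n$ with $n\ge6$.
   Context: Graphs finite, simple, undirected; $G-v$ is $G$ with $v$ deleted; the join of vertex-disjoint graphs adds all edges between them to the disjoint union; a cograph is a graph without induced $P_4$; the diameter is the maximum distance between two vertices. $G$ is a pseudo-cograph if $|V(G)|\le2$ or there are induced subgraphs $G_1,G_2$ of $G$ and $v\in V(G)$ with (F1) $V(G)=V(G_1)\cup V(G_2)$, $V(G_1)\cap V(G_2)=\{v\}$, $|V(G_1)|,|V(G_2)|>1$; (F2) $G_1,G_2$ are cographs; (F3) $G-v$ is the join or the disjoint union of $G_1-v$ and $G_2-v$. *)

(* A finite simple graph is a symmetric irreflexive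
   relation e on a finType T. Induced subgraphs are given by vertex sets. *)
From mathcomp Require Import all_boot.
Set Implicit Arguments. Unset Strict Implicit. Unset Printing Implicit Defensive.

Section Graphs.
Variables (T : finType) (e : rel T).

Definition simple_graph : Prop := symmetric e /\ irreflexive e.

Definition has_induced_P4 (S : {set T}) : Prop :=
  exists a b c d : T,
    [/\ [&& a \in S, b \in S, c \in S & d \in S],
        uniq [:: a; b; c; d],
        [&& e a b, e b c & e c d] &
        [&& ~~ e a c, ~~ e b d & ~~ e a d]].

Definition cograph (S : {set T}) : Prop := ~ has_induced_P4 S.

Definition join_split (S1 S2 : {set T}) (v : T) : Prop :=
  forall x y, x \in S1 :\ v -> y \in S2 :\ v -> e x y.

Definition union_split (S1 S2 : {set T}) (v : T) : Prop :=
  forall x y, x \in S1 :\ v -> y \in S2 :\ v -> ~~ e x y.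

Definition pseudo_cograph (S : {set T}) : Prop :=
  #|S| <= 2 \/
  exists (S1 S2 : {set T}) (v : T),
    [/\ [&& S1 \subset S, S2 \subset S & v \in S],
        [/\ S1 :|: S2 = S, S1 :&: S2 = [set v], 1 < #|S1| & 1 < #|S2|],
        cograph S1 /\ cograph S2 &
        join_split S1 S2 v \/ union_split S1 S2 v].

(* walk in G[U] from x to y with size p edges *)
Definition walk_in (U : {set T}) (x y : T) (p : seq T) : bool :=
  [&& path e x p, last x p == y & all (fun z => z \in U) (x :: p)].

Definition connected_in (U : {set T}) : Prop :=
  forall x y, x \in U -> y \in U -> exists p, walk_in U x y p.

Definition diameter_le (U : {set T}) (k : nat) : Prop :=
  forall x y, x \in U -> y \in U -> exists p, walk_in U x y p /\ size p <= k.

(* s is (the vertex sequence of) an induced path P_n in G, n = size s *)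
Definition induced_path (s : seq T) : Prop :=
  uniq s /\
  forall (x0 : T) (i j : nat), i < size s -> j < size s ->
    e (nth x0 s i) (nth x0 s j) = (j == i.+1) || (i == j.+1).
End Graphs.

(* A shortest walk is an induced path, so both claims reduce to: a
   pseudo-cograph contains no induced P6.  Given a split (G1, G2, v), every
   vertex of an induced P6 other than v lies on exactly one side.  If G - v is
   a disjoint union, no path edge crosses sides, and deleting v leaves a piece
   of at least three consecutive vertices, which together with v gives four
   consecutive vertices on one side.  If G - v is a join, every crossing pair
   is an edge; as P6 has maximum degree 2, one side contains no vertex other
   than v, so the whole P6 lies on the other side.  Either way a cograph G_i
   contains an induced P4. *)

From mathcomp Require Import all_boot zify.
Set Implicit Arguments. Unset Strict Implicit. Unset Printing Implicit Defensive.

Section SideCover.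
Variables (X : Type) (P Q : pred X).

Definition crossing (x y : X) : bool :=
  [&& P x, ~~ Q x, Q y & ~~ P y] || [&& Q x, ~~ P x, P y & ~~ Q y].

Lemma window_of_noncrossing (x0 : X) (s : seq X) :
  size s = 6 -> (forall x, P x || Q x) -> count (predI P Q) s <= 1 ->
  (forall i, i < 5 -> ~~ crossing (nth x0 s i) (nth x0 s i.+1)) \/
  (forall i j, i.+1 < j < 6 -> ~~ crossing (nth x0 s i) (nth x0 s j)) ->
  exists2 k, k <= 2 & all P (take 4 (drop k s)) || all Q (take 4 (drop k s)).
Proof.
case: s => [|a0 [|a1 [|a2 [|a3 [|a4 [|a5 [|]]]]]]] // _ cover count1 noncross.
suff: [|| all P [:: a0; a1; a2; a3] || all Q [:: a0; a1; a2; a3],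
          all P [:: a1; a2; a3; a4] || all Q [:: a1; a2; a3; a4] |
          all P [:: a2; a3; a4; a5] || all Q [:: a2; a3; a4; a5]].
  by case/or3P; [exists 0 | exists 1 | exists 2].
have: [&& ~~ crossing a0 a1, ~~ crossing a1 a2, ~~ crossing a2 a3,
          ~~ crossing a3 a4 & ~~ crossing a4 a5]
      || [&& ~~ crossing a0 a2, ~~ crossing a0 a3, ~~ crossing a0 a4,
             ~~ crossing a0 a5, ~~ crossing a1 a3, ~~ crossing a1 a4,
             ~~ crossing a1 a5, ~~ crossing a2 a4, ~~ crossing a2 a5
           & ~~ crossing a3 a5].
  case: noncross => nc; apply/orP; [left | right].
    by rewrite (nc 0) ?(nc 1) ?(nc 2) ?(nc 3) ?(nc 4).
  by rewrite (nc 0 2) ?(nc 0 3) ?(nc 0 4) ?(nc 0 5) ?(nc 1 3) ?(nc 1 4)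
             ?(nc 1 5) ?(nc 2 4) ?(nc 2 5) ?(nc 3 5).
(* The counting argument of the header, checked over all 2^12 placements. *)
move: count1 (cover a0) (cover a1) (cover a2) (cover a3) (cover a4) (cover a5).
rewrite /crossing /=.
by case: (P a0); case: (Q a0); case: (P a1); case: (Q a1); case: (P a2);
   case: (Q a2); case: (P a3); case: (Q a3); case: (P a4); case: (Q a4);
   case: (P a5); case: (Q a5).
Qed.
End SideCover.

Section Graph.
Variables (T : finType) (e : rel T).

Lemma induced_path_take n s : induced_path e s -> induced_path e (take n s).
Proof.
move=> [us adj]; split=> [|x0 i j]; first exact: take_uniq.
rewrite size_take_min !leq_min => /andP[i_n i_s] /andP[j_n j_s].
by rewrite !nth_take // adj.
Qed.

Lemma induced_path_drop n s : induced_path e s -> induced_path e (drop n s).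
Proof.
move=> [us adj]; split=> [|x0 i j]; first exact: drop_uniq.
rewrite size_drop !nth_drop => i_s j_s.
by rewrite adj -?ltn_subRL // -!addnS !eqn_add2l.
Qed.

Lemma induced_P4_has_induced_P4 (S : {set T}) (w : seq T) :
  size w = 4 -> induced_path e w -> {subset w <= S} -> has_induced_P4 e S.
Proof.
case: w => [|a [|b [|c [|d [|]]]]] // _ [uw adj] wS.
exists a, b, c, d; split=> //.
- by rewrite !wS ?mem_head ?inE ?eqxx ?orbT.
- by rewrite (adj a 0 1) ?(adj a 1 2) ?(adj a 2 3).
- by rewrite (adj a 0 2) ?(adj a 1 3) ?(adj a 0 3).
Qed.

Lemma walk_in_shortcut (U : {set T}) x y p1 m b p2 :
  walk_in e U x y (p1 ++ m ++ b :: p2) -> e (last x p1) b ->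
  walk_in e U x y (p1 ++ b :: p2).
Proof.
rewrite /walk_in !cat_path !last_cat /= !all_cat /=.
by move=> /and3P[/and3P[-> _ /andP[_ ->]] -> /and3P[-> -> /and3P[_ -> ->]]] ->.
Qed.

Lemma exists_shortest_walk (U : {set T}) x y :
  (exists p, walk_in e U x y p) ->
  exists p, [/\ walk_in e U x y p, uniq (x :: p) &
                forall q, walk_in e U x y q -> size p <= size q].
Proof.
move=> [p0 w0].
have : exists n, [exists t : n.-tuple T, walk_in e U x y t].
  by exists (size p0); apply/existsP; exists (in_tuple p0).
case/ex_minnP=> n /existsP[t /and3P[tP t_y tU]] min_n.
case: (shortenP tP) t_y => q qP uq sub_qt q_y.
have size_q : size q <= n.
  by rewrite -(size_tuple t); apply: uniq_leq_size sub_qt; case/andP: uq.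
exists q; split=> // [|r wr].
  rewrite /walk_in qP q_y /=; move: tU => /= /andP[-> /allP tU].
  by apply/allP => z /sub_qt /tU.
by apply: leq_trans size_q (min_n _ _); apply/existsP; exists (in_tuple r).
Qed.

Lemma shortest_walk_chordless (U : {set T}) x y p x0 i j :
  walk_in e U x y p -> (forall q, walk_in e U x y q -> size p <= size q) ->
  i.+1 < j <= size p -> ~~ e (nth x0 (x :: p) i) (nth x0 (x :: p) j).
Proof.
move=> wp min_p /andP[ij jp]; apply/negP => chord.
have j_pos : 0 < j by lia.
suff /min_p : walk_in e U x y (take i p ++ nth x p j.-1 :: drop j p).
  by rewrite size_cat /= size_takel ?size_drop; lia.
have split_p : p = take i p ++ take (j.-1 - i) (drop i p) ++ nth x p j.-1 :: drop j p.
  rewrite -{3}(prednK j_pos) -drop_nth; last lia.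
  by rewrite -{2}(@subnK i j.-1) -?drop_drop ?cat_take_drop //; lia.
rewrite {1}split_p in wp; apply: (walk_in_shortcut wp).
rewrite (last_nth x) size_takel; last lia.
rewrite -[x :: take i p]/(take i.+1 (x :: p)) nth_take //.
rewrite (set_nth_default x0) /=; last lia.
by move: chord; rewrite -(prednK j_pos) /= (@set_nth_default _ p x x0) //; lia.
Qed.

Lemma shortest_walk_induced (U : {set T}) x y p :
  symmetric e -> irreflexive e ->
  walk_in e U x y p -> uniq (x :: p) ->
  (forall q, walk_in e U x y q -> size p <= size q) ->
  induced_path e (x :: p).
Proof.
move=> sym_e irr_e wp up min_p; split=> // x0.
suff le_case i j : i <= j -> j < size (x :: p) ->
    e (nth x0 (x :: p) i) (nth x0 (x :: p) j) = (j == i.+1) || (i == j.+1).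
  move=> i j i_s j_s; have [ij | /ltnW ji] := leqP i j; first exact: le_case.
  by rewrite sym_e orbC le_case.
move=> ij; case: (ltngtP i.+1 j) => [chord | ji | <-] j_s.
- rewrite (negbTE (shortest_walk_chordless x0 wp min_p _)); last by rewrite chord.
  by rewrite ltn_eqF // ltnS.
- have -> : j = i by lia.
  by rewrite irr_e ltn_eqF.
- by case/and3P: wp => /(pathP x0) step _ _; rewrite (step i j_s).
Qed.

Section Split.
Variables (S1 S2 : {set T}) (v : T).
Hypotheses (S12 : S1 :|: S2 = [set: T]) (S1S2 : S1 :&: S2 = [set v]).

Let in1 : pred T := fun x => x \in S1.
Let in2 : pred T := fun x => x \in S2.

Lemma split_cover x : in1 x || in2 x.
Proof. by rewrite /in1 /in2 -in_setU S12 inE. Qed.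

Lemma split_count_shared s : uniq s -> count (predI in1 in2) s <= 1.
Proof.
move=> us; rewrite (@eq_count _ _ (pred1 v)) ?count_uniq_mem ?leq_b1 // => x.
by rewrite /= /in1 /in2 -in_setI S1S2 inE.
Qed.

Lemma crossing_split_private x y : crossing in1 in2 x y ->
  (x \in S1 :\ v) && (y \in S2 :\ v) || (y \in S1 :\ v) && (x \in S2 :\ v).
Proof.
have private (A B : {set T}) z : v \in B -> z \in A -> z \notin B -> z \in A :\ v.
  by move=> vB zA zB; rewrite in_setD1 zA andbT; apply: contraNneq zB => ->.
have /setIP[vS1 vS2] : v \in S1 :&: S2 by rewrite S1S2 set11.
case/orP=> /and4P[x1 x2 y2 y1]; apply/orP; [left | right].
  by rewrite (private S1 S2) ?(private S2 S1).
by rewrite (private S1 S2) ?(private S2 S1).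
Qed.

Lemma join_split_crossing x y : symmetric e -> join_split e S1 S2 v ->
  crossing in1 in2 x y -> e x y.
Proof.
move=> sym_e J /crossing_split_private /orP[] /andP[? ?]; last rewrite sym_e.
all: exact: J.
Qed.

Lemma union_split_crossing x y : symmetric e -> union_split e S1 S2 v ->
  crossing in1 in2 x y -> ~~ e x y.
Proof.
move=> sym_e U /crossing_split_private /orP[] /andP[? ?]; last rewrite sym_e.
all: exact: U.
Qed.

Lemma split_induced_path_noncrossing x0 s : symmetric e ->
  join_split e S1 S2 v \/ union_split e S1 S2 v ->
  induced_path e s -> size s = 6 ->
  (forall i, i < 5 -> ~~ crossing in1 in2 (nth x0 s i) (nth x0 s i.+1)) \/
  (forall i j, i.+1 < j < 6 -> ~~ crossing in1 in2 (nth x0 s i) (nth x0 s j)).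
Proof.
move=> sym_e [J | U] [_ adj] size_s; [right | left].
  move=> i j /andP[ij j6]; apply/negP => /(join_split_crossing sym_e J).
  by rewrite adj ?size_s //; [apply/negP; lia | lia].
move=> i i5; apply/negP => /(union_split_crossing sym_e U).
by rewrite adj ?size_s ?eqxx //; lia.
Qed.

Lemma split_cographs_induced_path_small s : symmetric e ->
  cograph e S1 -> cograph e S2 ->
  join_split e S1 S2 v \/ union_split e S1 S2 v ->
  induced_path e s -> size s = 6 -> False.
Proof.
move=> sym_e cog1 cog2 split12 ind_s size_s.
have P4_in (S : {set T}) k : k <= 2 ->
    all (fun x => x \in S) (take 4 (drop k s)) -> has_induced_P4 e S.
  move=> k2 /allP wS; apply: (@induced_P4_has_induced_P4 _ (take 4 (drop k s))) => //.
    by rewrite size_takel // size_drop size_s; lia.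
  exact/induced_path_take/induced_path_drop.
have [k k2 /orP[w1 | w2]] := window_of_noncrossing size_s split_cover
  (split_count_shared ind_s.1)
  (split_induced_path_noncrossing (head v s) sym_e split12 ind_s size_s).
  exact: cog1 (P4_in _ _ k2 w1).
exact: cog2 (P4_in _ _ k2 w2).
Qed.

End Split.

Lemma pseudo_cograph_induced_path_small s :
  simple_graph e -> pseudo_cograph e [set: T] ->
  induced_path e s -> size s < 6.
Proof.
move=> [sym_e _] pcog ind_s; rewrite ltnNge; apply/negP => s6.
have ind_t : induced_path e (take 6 s) by apply: induced_path_take.
have size_t : size (take 6 s) = 6 by rewrite size_takel.
case: pcog => [small | [S1 [S2 [v [_ [S12 S1S2 _ _] [cog1 cog2] split12]]]]].
  have := max_card (mem (take 6 s)); rewrite (card_uniqP ind_t.1) size_t -cardsT.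
  by move/leq_trans/(_ small).
exact: split_cographs_induced_path_small S12 S1S2 _ sym_e cog1 cog2 split12 ind_t size_t.
Qed.

End Graph.

Theorem mainTheorem10 (T : finType) (e : rel T) :
  simple_graph e -> pseudo_cograph e [set: T] ->
  (forall U : {set T}, connected_in e U -> diameter_le e U 4) /\
  (forall s : seq T, 6 <= size s -> ~ induced_path e s).
Proof.
move=> simple_e pcog; have [sym_e irr_e] := simple_e.
have small s : induced_path e s -> size s < 6.
  exact: pseudo_cograph_induced_path_small simple_e pcog.
split=> [U conn_U x y xU yU | s s6 /small].
  have [p [wp up min_p]] := exists_shortest_walk (conn_U x y xU yU).
  by exists p; split; last exact: small (shortest_walk_induced sym_e irr_e wp up min_p).
by rewrite ltnNge s6.
Qed.
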